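(* Let $G=(V,E)$ be a finite, simple, connected graph on $n=n(G)$ vertices with maximum degree $\Delta\ge 2$. Then $Z(G)\le \frac{(\Delta-2)n+2}{\Delta-1}$, and if equality $Z(G)=\frac{(\Delta-2)n+2}{\Delta-1}$ holds, then $G$ is regular.
   Context: All graphs are finite, simple and undirected. A set $S\subseteq V$ is a zero forcing set of $G$ if the following process colors every vertex: initially the vertices of $S$ are colored and all others uncolored; repeatedly, whenever a colored vertex has at most one uncolored neighbor, that neighbor becomes colored. The zero forcing number $Z(G)$ is the minimum cardinality of a zero forcing set of $G$. *)

From mathcomp Require Import all_boot.
Set Implicit Arguments. Unset Strict Implicit. Unset Printing Implicit Defensive.

(* A finite simple graph: vertex type T : finType, adjacency e : rel T,
   assumed symmetric and irreflexive in the theorem statement. *)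

Definition deg (T : finType) (e : rel T) (v : T) : nat := #|[set u | e v u]|.

Definition maxdeg (T : finType) (e : rel T) : nat := \max_(v : T) deg e v.

Definition zf_step (T : finType) (e : rel T) (A : {set T}) : {set T} :=
  A :|: [set u | [exists v, [&& v \in A, e v u &
           [forall w, (e v w && (w != u)) ==> (w \in A)]]]].

(* Final coloured set: the step is monotone and inflationary, so #|T| rounds
   suffice to reach the fixpoint. *)
Definition zf_closure (T : finType) (e : rel T) (S : {set T}) : {set T} :=
  iter #|T| (zf_step e) S.

Definition zero_forcing (T : finType) (e : rel T) (S : {set T}) : bool :=
  zf_closure e S == [set: T].

Lemma zero_forcing_exists (T : finType) (e : rel T) :
  exists n, [exists S : {set T}, (#|S| == n) && zero_forcing e S].
Proof.
exists #|T|; apply/existsP; exists [set: T].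
rewrite cardsT eqxx /= /zero_forcing /zf_closure.
apply/eqP; elim: #|T| => //= n ->.
by apply/setP => x; rewrite !inE.
Qed.

Definition Z (T : finType) (e : rel T) : nat := ex_minn (zero_forcing_exists e).

(* Colour a vertex v together with all of its neighbours but one, u; then v
   forces u.  As long as the coloured set C is not everything, connectivity
   gives a coloured x with an uncoloured neighbour; since every vertex of C
   already has a neighbour in C, x has at most Delta - 1 uncoloured
   neighbours N, and colouring all of N but one (which x then forces) grows C
   by |N| at the price of |N| - 1 new initial vertices.  The potential
   (Delta - 1)|S| + (Delta - deg v) <= (Delta - 2)|C| + 2 holds with equality
   after the first round and is preserved by every later round; when C is the
   whole vertex set it bounds Z(G), and equality forces deg v = Delta for the
   arbitrary starting vertex v. *)
From mathcomp Require Import all_boot.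
From mathcomp Require Import zify.

Set Implicit Arguments.
Unset Strict Implicit.
Unset Printing Implicit Defensive.

Section ZeroForcingClosure.
Variables (T : finType) (e : rel T).

Lemma zf_step_incr (A : {set T}) : A \subset zf_step e A.
Proof. by apply/subsetP => x; rewrite inE => ->. Qed.

Lemma zf_step_mono : {homo zf_step e : A B / A \subset B}.
Proof.
move=> A B AB; apply/subsetP => u; rewrite !inE.
case/orP=> [uA|/existsP [v /and3P [vA evu /forallP vA']]].
  by rewrite (subsetP AB _ uA).
apply/orP; right; apply/existsP; exists v; rewrite (subsetP AB _ vA) evu /=.
by apply/forallP => w; apply/implyP => /(implyP (vA' w)) /(subsetP AB).
Qed.

Lemma zf_step_force (A : {set T}) v u :
  v \in A -> e v u -> (forall w, e v w -> w != u -> w \in A) ->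
  u \in zf_step e A.
Proof.
move=> vA evu vA'; rewrite !inE; apply/orP; right; apply/existsP; exists v.
by rewrite vA evu; apply/forallP => w; apply/implyP => /andP [/vA'].
Qed.

Lemma sub_iter_zf_step k (S : {set T}) : S \subset iter k (zf_step e) S.
Proof. by elim: k => //= k IH; apply: subset_trans IH (zf_step_incr _). Qed.

(* [zf_closure e S] is the [fixset] of [A |-> S :|: zf_step e A], whose
   iterates from [set0] lag one round behind those of [zf_step e] from [S]. *)
Lemma zf_closure_step (S : {set T}) : zf_step e (zf_closure e S) \subset zf_closure e S.
Proof.
set F := fun A => S :|: zf_step e A.
have F_mono : {homo F : A B / A \subset B}.
  by move=> A B AB; apply: setUS; apply: zf_step_mono.
have iterF k : iter k.+1 F set0 = iter k (zf_step e) S.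
  elim: k => [|k /= <-].
    apply/setP => x; rewrite !inE /=; case: (x \in S) => //=.
    by apply/negbTE/existsPn => v; rewrite inE.
  by apply/setUidPr; apply: subset_trans (zf_step_incr _); apply: subsetUl.
have -> : zf_closure e S = fixset F by rewrite /zf_closure -iterF /= fixsetK.
by apply: subset_trans (subsetUr S _) _; rewrite -/(F _) (fixsetK F_mono).
Qed.

Lemma sub_zf_closure (S : {set T}) : S \subset zf_closure e S.
Proof. exact: sub_iter_zf_step. Qed.

Lemma zf_closureS (S1 S2 : {set T}) :
  S1 \subset S2 -> zf_closure e S1 \subset zf_closure e S2.
Proof. by move=> S12; rewrite /zf_closure; elim: #|T| => //= k; apply: zf_step_mono. Qed.

Lemma setT_sub_zero_forcing (S : {set T}) : [set: T] \subset zf_closure e S -> zero_forcing e S.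
Proof. by rewrite /zero_forcing eqEsubset subsetT. Qed.

Lemma Z_le_card (S : {set T}) : zero_forcing e S -> Z e <= #|S|.
Proof.
by move=> zfS; rewrite /Z; case: ex_minnP => m _; apply; apply/existsP; exists S; rewrite eqxx.
Qed.

End ZeroForcingClosure.

Lemma connect_exit (T : finType) (e : rel T) (C : {set T}) x y :
  connect e x y -> x \in C -> y \notin C ->
  exists2 z, z \in C & exists2 u, u \notin C & e z u.
Proof.
case/connectP=> p; elim: p x => [|z p IH] x /=; first by move=> _ -> ->.
case/andP=> exz pz yl xC yC; have [zC|zC] := boolP (z \in C).
  exact: IH pz yl zC yC.
by exists x => //; exists z.
Qed.

Lemma connect_neq_edge (T : finType) (e : rel T) x y :
  connect e x y -> x != y -> exists z, e x z.
Proof.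
case/connectP=> [[|z p]] /=; first by move=> _ ->; rewrite eqxx.
by case/andP=> exz _ _ _; exists z.
Qed.

Lemma potential_start D d n s :
  s <= n -> n <= d -> d <= D -> (D - 1) * s + (D - d) <= (D - 2) * n.+1 + 2.
Proof. case: D => [|[|D]] sn nd dD; rewrite ?subn1 ?subn2 /=; nia. Qed.

Lemma potential_step D c s s' k n :
  0 < n < D -> s' < s + n -> (D - 1) * s + c <= (D - 2) * k + 2 ->
  (D - 1) * s' + c <= (D - 2) * (k + n) + 2.
Proof. case: D => [|[|D]] /andP [n0 nD] ss' pot; rewrite ?subn1 ?subn2 /= in pot *; nia. Qed.

Lemma maxdeg_attained (T : finType) (e : rel T) :
  0 < maxdeg e -> exists v, deg e v = maxdeg e.
Proof.
rewrite /maxdeg => D0; have [|v ->] := @eq_bigmax T (deg e); last by exists v.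
rewrite lt0n; apply: contraTneq D0 => /card0_eq T0.
by rewrite -leqNgt; apply/bigmax_leqP => v; have := T0 v; rewrite !inE.
Qed.

Section Greedy.
Variables (T : finType) (e : rel T) (D : nat).
Hypothesis e_sym : symmetric e.
Hypothesis e_conn : forall x y : T, connect e x y.
Hypothesis deg_le : forall x, deg e x <= D.

Definition nbrs_out (C : {set T}) (x : T) : {set T} := [set w | e x w & w \notin C].

Lemma card_setU_nbrs_out (C : {set T}) x :
  #|C :|: nbrs_out C x| = #|C| + #|nbrs_out C x|.
Proof.
apply/eqP; rewrite (leq_card_setU _ _).2 disjoints_subset.
by apply/subsetP => w wC; rewrite !inE wC andbF.
Qed.

Lemma card_setU_setD1 (S B : {set T}) u : u \in B -> #|S :|: (B :\ u)| < #|S| + #|B|.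
Proof.
move=> uB; rewrite (cardsD1 u B) uB addnS ltnS.
exact: (leq_card_setU _ _).1.
Qed.

Lemma card_nbrs_out (C : {set T}) x : #|nbrs_out C x| <= deg e x.
Proof. by apply: subset_leq_card; apply/subsetP => w; rewrite !inE => /andP []. Qed.

Lemma card_nbrs_out_lt (C : {set T}) x y :
  y \in C -> e x y -> #|nbrs_out C x| < deg e x.
Proof.
move=> yC exy; apply: proper_card; apply/properP; split.
  by apply/subsetP => w; rewrite !inE => /andP [].
by exists y; rewrite !inE ?yC ?andbF.
Qed.

Lemma zf_closure_extend (S C : {set T}) x u :
  C \subset zf_closure e S -> x \in C -> u \in nbrs_out C x ->
  C :|: nbrs_out C x \subset zf_closure e (S :|: (nbrs_out C x :\ u)).
Proof.
set N := nbrs_out C x; set S' := S :|: (N :\ u) => CS xC uN.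
have CS' : C \subset zf_closure e S'.
  exact: subset_trans CS (zf_closureS e (subsetUl _ _)).
have NS' : N :\ u \subset zf_closure e S'.
  exact: subset_trans (subsetUr _ _) (sub_zf_closure _ _).
apply/subsetP => w; rewrite inE => /orP [/(subsetP CS') //|wN].
have [->|wu] := eqVneq w u; last by apply: (subsetP NS'); rewrite in_setD1 wu.
apply: (subsetP (zf_closure_step _ _)); apply: zf_step_force (subsetP CS' _ xC) _ _.
  by move: uN; rewrite inE => /andP [].
move=> z exz zu; have [zC|zC] := boolP (z \in C); first exact: (subsetP CS').
by apply: (subsetP NS'); rewrite !inE zu exz.
Qed.

Definition greedy_inv c (S C : {set T}) : Prop :=
  [/\ C \subset zf_closure e S,
      {in C, forall y, exists2 w, w \in C & e y w} &
      (D - 1) * #|S| + c <= (D - 2) * #|C| + 2].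

Lemma greedy_inv_start v u :
  e v u -> u != v ->
  greedy_inv (D - deg e v)
    ([set v] :|: (nbrs_out [set v] v :\ u)) ([set v] :|: nbrs_out [set v] v).
Proof.
set N := nbrs_out [set v] v => evu uv.
have uN : u \in N by rewrite !inE evu uv.
split.
- by apply: zf_closure_extend (sub_zf_closure _ _) (set11 v) uN.
- move=> y; rewrite inE => /orP [/set1P ->|yN]; first by exists u; rewrite // in_setU uN orbT.
  by exists v; rewrite ?inE ?eqxx // e_sym; move: yN; rewrite inE => /andP [].
- rewrite card_setU_nbrs_out cards1; apply: potential_start (card_nbrs_out _ _) (deg_le v).
  by have := card_setU_setD1 [set v] uN; rewrite cards1.
Qed.

Lemma greedy_inv_step c (S C : {set T}) x u :
  greedy_inv c S C -> x \in C -> u \in nbrs_out C x ->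
  greedy_inv c (S :|: (nbrs_out C x :\ u)) (C :|: nbrs_out C x).
Proof.
case=> CS Cnbr count xC uN; split.
- exact: zf_closure_extend.
- move=> y; rewrite inE => /orP [/Cnbr [w wC eyw]|yN].
    by exists w; rewrite // inE wC.
  by exists x; rewrite ?inE ?xC // e_sym; move: yN; rewrite inE => /andP [].
- rewrite card_setU_nbrs_out; apply: potential_step (card_setU_setD1 S uN) count.
  have [y yC exy] := Cnbr x xC.
  rewrite (leq_trans (card_nbrs_out_lt yC exy) (deg_le x)) andbT.
  by apply/card_gt0P; exists u.
Qed.

Lemma greedy_complete c (S C : {set T}) :
  greedy_inv c S C -> C != set0 ->
  exists S', zero_forcing e S' /\ (D - 1) * #|S'| + c <= (D - 2) * #|T| + 2.
Proof.
have [n] := ubnP #|~: C|; elim: n => // n IH in S C *; rewrite ltnS => Cn inv.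
case/set0Pn=> x0 x0C; have [CT|] := eqVneq C [set: T].
  case: inv; rewrite CT cardsT => CS _ count.
  by exists S; split=> //; apply: setT_sub_zero_forcing.
rewrite eqEsubset subsetT /= => /subsetPn [y0 _ y0C].
have [x xC [u uC exu]] := connect_exit (e_conn x0 y0) x0C y0C.
have uN : u \in nbrs_out C x by rewrite inE exu uC.
apply: IH (greedy_inv_step inv xC uN) _; last by apply/set0Pn; exists x0; rewrite inE x0C.
apply: leq_trans Cn; apply: proper_card; apply/properP; split.
  by rewrite setCS subsetUl.
by exists u; rewrite !in_setC ?uC // in_setU uN orbT.
Qed.

Lemma greedy_zero_forcing_set v u :
  e v u -> u != v ->
  exists S, zero_forcing e S /\ (D - 1) * #|S| + (D - deg e v) <= (D - 2) * #|T| + 2.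
Proof.
move=> evu uv; apply: greedy_complete (greedy_inv_start evu uv) _.
by apply/set0Pn; exists v; rewrite !inE eqxx.
Qed.

End Greedy.

Theorem mainTheorem5 (T : finType) (e : rel T)
  (e_sym : symmetric e) (e_irr : irreflexive e)
  (e_conn : forall x y : T, connect e x y)
  (hD : 2 <= maxdeg e) :
  (maxdeg e - 1) * Z e <= (maxdeg e - 2) * #|T| + 2 /\
  ((maxdeg e - 1) * Z e = (maxdeg e - 2) * #|T| + 2 ->
     forall v : T, deg e v = maxdeg e).
Proof.
set D := maxdeg e.
have deg_le x : deg e x <= D by apply: leq_bigmax.
have [w degw] := maxdeg_attained (ltnW hD).
have nbr v : exists z, e v z.
  have [->|vw] := eqVneq v w; last exact: connect_neq_edge (e_conn v w) vw.
  have /card_gt0P [z] : 0 < deg e w by rewrite degw ltnW.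
  by rewrite inE; exists z.
have bound v : (D - 1) * Z e + (D - deg e v) <= (D - 2) * #|T| + 2.
  have [z evz] := nbr v.
  have zv : z != v by apply: contraTneq evz => ->; rewrite e_irr.
  have [S [zfS cardS]] := greedy_zero_forcing_set e_sym e_conn deg_le evz zv.
  by apply: leq_trans cardS; rewrite leq_add2r leq_mul2l Z_le_card ?orbT.
split; first exact: leq_trans (leq_addr _ _) (bound w).
move=> eqZ v; have := bound v; rewrite eqZ; have := deg_le v; lia.
Qed.
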